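(* Let $\psi$ be a strictly convex differentiable real function and let $d_{\zeta^+}$ be the associated divergence restricted to nonzero eigenvalues (defined in the context). Then for every $A\in\mathbb{R}^{q\times p}$, $$d_{\zeta^+}(AA^\top\,\|\,I_q)=d_{\zeta^+}(A^\top A\,\|\,I_p).$$
   Context: For a strictly convex differentiable $\psi$, let $\mathrm{div}_\psi(x\|y)=\psi(x)-\psi(y)-(x-y)\psi'(y)$. For symmetric matrices $X,Y$ of the same size $m\times m$, let $\lambda_1(X)\ge\dots\ge\lambda_m(X)$ with orthonormal eigenvectors $u_1,\dots,u_m$, and $\lambda_1(Y)\ge\dots\ge\lambda_m(Y)$ with orthonormal eigenvectors $v_1,\dots,v_m$. Define $$d_{\zeta^+}(X\|Y):=\sum_{i:\lambda_i(X)\ne0}\ \sum_{j:\lambda_j(Y)\neq0}(u_i^\top v_j)^2\,\mathrm{div}_\psi\big(\lambda_i(X)\,\|\,\lambda_j(Y)\big).$$ (This is the spectral Bregman divergence induced by $\zeta(X)=\sum_i\psi(\lambda_i(X))$, restricted to nonzero eigenvalues.) *)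

From HB Require Import structures.
From mathcomp Require Import all_boot all_order all_algebra.
From mathcomp Require Import all_classical all_reals all_analysis.
Set Implicit Arguments. Unset Strict Implicit. Unset Printing Implicit Defensive.
Import Order.TTheory GRing.Theory Num.Theory.
Local Open Scope ring_scope.

Section Defs.
Variable R : realType.

Definition strictly_convex (psi : R -> R) : Prop :=
  forall x y t : R, x != y -> 0 < t -> t < 1 ->
    psi (t * x + (1 - t) * y) < t * psi x + (1 - t) * psi y.

Definition differentiable_everywhere (psi : R -> R) : Prop :=
  forall x : R, derivable psi x 1.

Definition div_psi (psi : R -> R) (x y : R) : R :=
  psi x - psi y - (x - y) * derive1 psi y.

Definition spectral_decomp (m : nat) (X : 'M[R]_m) (U : 'M[R]_m)
    (lam : 'I_m -> R) : Prop :=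
  [/\ U^T *m U = 1%:M,
      forall i : 'I_m, X *m col i U = lam i *: col i U
    & forall i j : 'I_m, (i <= j)%N -> lam j <= lam i].

(* d_{zeta^+}(X||Y) computed from spectral decompositions (U,lam) of X and
   (V,mu) of Y; note (U^T V)_{ij} = u_i^T v_j. *)
Definition dzeta_plus (psi : R -> R) (m : nat) (U : 'M[R]_m) (lam : 'I_m -> R)
    (V : 'M[R]_m) (mu : 'I_m -> R) : R :=
  \sum_(i < m | lam i != 0) \sum_(j < m | mu j != 0)
     ((U^T *m V) i j) ^+ 2 * div_psi psi (lam i) (mu j).

End Defs.

From HB Require Import structures.
From mathcomp Require Import all_boot all_order all_algebra.
From mathcomp Require Import all_classical all_reals all_analysis.
Import Order.TTheory GRing.Theory Num.Theory.
Local Open Scope ring_scope.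

(* The matrices A A^T and A^T A have the same nonzero eigenvalues, with
   multiplicities: the Sylvester determinant identity gives
   X^p chi_{A A^T} = X^q chi_{A^T A}, and a spectral decomposition splits each
   characteristic polynomial into the linear factors of its eigenvalues.
   Against the identity all eigenvalues mu_j equal 1 and the squared overlaps
   (u_i^T v_j)^2 sum to 1 over j, as rows of the orthogonal matrix U^T V; hence
   d_{zeta^+}(X || I) = sum_{lambda_i <> 0} div_psi(lambda_i || 1) only depends
   on the nonzero spectrum of X. *)

Lemma det_scalar_sub_mulmxC {R : comNzRingType} {q p : nat} (x : R)
    (A : 'M[R]_(q, p)) (B : 'M[R]_(p, q)) :
  x ^+ p * \det (x%:M - A *m B) = x ^+ q * \det (x%:M - B *m A).
Proof.
(* Eliminating either off-diagonal block of L leaves a block-triangular matrix. *)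
pose L := block_mx (x%:M : 'M[R]_q) A B (1%:M : 'M[R]_p).
have hAB : block_mx 1%:M (- A) 0 1%:M *m L = block_mx (x%:M - A *m B) 0 B 1%:M.
  by rewrite mulmx_block !mul1mx !mul0mx !add0r mulmx1 mulNmx addrN addrC.
have hBA : block_mx 1%:M 0 (- B) x%:M *m L = block_mx x%:M A 0 (x%:M - B *m A).
  rewrite mulmx_block !mul1mx !mul0mx !addr0 mulmx1 !mulNmx.
  by rewrite mul_mx_scalar mul_scalar_mx addNr addrC.
have := congr1 determinant hBA; have := congr1 determinant hAB.
rewrite !det_mulmx !det_lblock !det_ublock !det1 !det_scalar.
by rewrite !mul1r mulr1 => <- <-.
Qed.

Lemma char_poly_mulmxC {R : comNzRingType} {q p : nat}
    (A : 'M[R]_(q, p)) (B : 'M[R]_(p, q)) :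
  'X^p * char_poly (A *m B) = 'X^q * char_poly (B *m A).
Proof. by rewrite /char_poly /char_poly_mx !map_mxM det_scalar_sub_mulmxC. Qed.

Lemma char_poly_conj {R : comNzRingType} {n : nat} (V W X : 'M[R]_n) :
  W *m V = 1%:M -> char_poly (V *m X *m W) = char_poly X.
Proof.
move=> hWV; have hW : map_mx polyC W *m map_mx polyC V = 1%:M.
  by rewrite -map_mxM hWV map_mx1.
rewrite /char_poly; have -> : char_poly_mx (V *m X *m W)
    = map_mx polyC V *m char_poly_mx X *m map_mx polyC W.
  rewrite /char_poly_mx !map_mxM mulmxBr mulmxBl mul_mx_scalar -scalemxAl.
  by rewrite (mulmx1C hW) scalemx1.
by rewrite !det_mulmx mulrAC -det_mulmx (mulmx1C hW) det1 mul1r.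
Qed.

Lemma char_poly_diag {R : comNzRingType} {n : nat} (d : 'rV[R]_n) :
  char_poly (diag_mx d) = \prod_i ('X - (d 0 i)%:P).
Proof.
rewrite char_poly_trig ?diag_mx_is_trig //.
by apply: eq_bigr => i _; rewrite mxE eqxx.
Qed.

Lemma sum_sqr_row_orthomx {R : comNzRingType} {m n : nat} (W : 'M[R]_(m, n)) i :
  W *m W^T = 1%:M -> \sum_j W i j ^+ 2 = 1.
Proof.
move=> /(congr1 (fun M : 'M[R]_m => M i i)); rewrite !mxE eqxx mulr1n => <-.
by apply: eq_bigr => j _; rewrite mxE expr2.
Qed.

Lemma spectral_decompE {R : realType} {m : nat} {X U : 'M[R]_m} {lam : 'I_m -> R} :
  spectral_decomp X U lam -> X = U *m diag_mx (\row_i lam i) *m U^T.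
Proof.
case=> /mulmx1C hU hX _.
have -> : U *m diag_mx (\row_i lam i) = X *m U.
  apply/matrixP => a i; rewrite mul_mx_diag !mxE mulrC.
  have /matrixP/(_ a 0) := hX i; rewrite !mxE => <-.
  by apply: eq_bigr => k _; rewrite !mxE.
by rewrite -mulmxA hU mulmx1.
Qed.

Lemma char_poly_spectral_decomp {R : realType} {m : nat} {X U : 'M[R]_m}
    {lam : 'I_m -> R} :
  spectral_decomp X U lam -> char_poly X = \prod_i ('X - (lam i)%:P).
Proof.
move=> hX; rewrite (spectral_decompE hX) char_poly_conj; last by case: hX.
by rewrite char_poly_diag; apply: eq_bigr => i _; rewrite mxE.
Qed.

Lemma spectral_decomp_scalar {R : realType} {m : nat} {a : R} {V : 'M[R]_m}
    {mu : 'I_m -> R} :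
  spectral_decomp a%:M V mu -> forall j, mu j = a.
Proof.
case=> hV hX _ j; apply/eqP; rewrite -subr_eq0.
have hVj : \sum_k V^T j k ^+ 2 = 1 by apply: sum_sqr_row_orthomx; rewrite trmxK.
rewrite -[_ - _]mulr1 -hVj mulr_sumr big1 // => k _.
have /matrixP/(_ k 0) := hX j; rewrite mul_scalar_mx !mxE => hk.
by rewrite expr2 mulrA mulrBl hk subrr mul0r.
Qed.

Lemma dzeta_plus_id {R : realType} (psi : R -> R) {m : nat} {X U V : 'M[R]_m}
    {lam mu : 'I_m -> R} :
  spectral_decomp X U lam -> spectral_decomp 1%:M V mu ->
  dzeta_plus psi U lam V mu = \sum_(i | lam i != 0) div_psi psi (lam i) 1.
Proof.
move=> [hU _ _] hV; have mu1 := spectral_decomp_scalar hV.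
case: hV => /mulmx1C hV _ _; apply: eq_bigr => i _.
rewrite (eq_bigl xpredT) => [|j]; last by rewrite mu1 oner_neq0.
under eq_bigr do rewrite mu1.
rewrite -mulr_suml sum_sqr_row_orthomx ?mul1r //.
by rewrite trmx_mul trmxK mulmxA -(mulmxA _ V) hV mulmx1 hU.
Qed.

Lemma big_nonzero_roots_eq {R : fieldType} {V : nmodType} (f : R -> V)
    {m n : nat} (r : 'I_m -> R) (s : 'I_n -> R) :
  'X^n * \prod_i ('X - (r i)%:P) = 'X^m * \prod_j ('X - (s j)%:P) ->
  \sum_(i | r i != 0) f (r i) = \sum_(j | s j != 0) f (s j).
Proof.
move=> eq_prod.
have perm_roots : perm_eq (nseq n 0 ++ map r (index_enum 'I_m))
                          (nseq m 0 ++ map s (index_enum 'I_n)).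
  apply: prod_XsubC_eq.
  by rewrite !big_cat !big_map !big_nseq subr0 !iter_mulr_1.
have := @perm_big _ +%R 0 _ _ _ (fun x => x != 0) f perm_roots.
by rewrite !big_cat !big_nseq_cond eqxx /= !add0r !big_map.
Qed.

Theorem lemmaE2 (R : realType) (psi : R -> R)
    (hconv : strictly_convex psi) (hdiff : differentiable_everywhere psi)
    (q p : nat) (A : 'M[R]_(q, p))
    (U1 V1 : 'M[R]_q) (l1 m1 : 'I_q -> R)
    (U2 V2 : 'M[R]_p) (l2 m2 : 'I_p -> R) :
  spectral_decomp (A *m A^T) U1 l1 ->
  spectral_decomp (1%:M : 'M[R]_q) V1 m1 ->
  spectral_decomp (A^T *m A) U2 l2 ->
  spectral_decomp (1%:M : 'M[R]_p) V2 m2 ->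
  dzeta_plus psi U1 l1 V1 m1 = dzeta_plus psi U2 l2 V2 m2.
Proof.
move=> hAAt hV1 hAtA hV2.
rewrite (dzeta_plus_id psi hAAt hV1) (dzeta_plus_id psi hAtA hV2).
apply: (big_nonzero_roots_eq (div_psi psi ^~ 1)).
by rewrite -(char_poly_spectral_decomp hAAt) -(char_poly_spectral_decomp hAtA)
  char_poly_mulmxC.
Qed.
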